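(* Let $N=q_1^{n_1}q_2^{n_2}\cdots q_r^{n_r}$ with primes $q_1<\dots<q_r$ and positive integers $n_i$, and let $\mathbf{s}$ be a Zadoff–Chu sequence of length $N$. Suppose that for some $1\le i\le r$ and integers $a,b$ the polynomial $\pi(x)=x^{q_i}+ax+b\in\mathbb{Z}_N[x]$ permutes $\mathbb{Z}_N$. Then the periodic auto-correlation $\theta(d)$ of the interleaved sequence $\mathbf{s}\circ\pi$ satisfies $\theta(d)=0$ for every $0<d<N$ with $q_i^{n_i}\nmid d$.
   Context: $\xi_N=e^{-2\pi\sqrt{-1}/N}$, $\xi_N^{x/2}=e^{-\pi\sqrt{-1}x/N}$. A Zadoff–Chu sequence of length $N$ is $s(k)=\xi_N^{u(k^2+(N\bmod2)k+2lk)/2}$, $0\le k<N$, with $\gcd(u,N)=1$ and $l$ an integer. $(\mathbf{s}\circ\pi)(k)=s(\pi(k)\bmod N)$. The periodic auto-correlation of a length-$N$ sequence $\mathbf{y}$ is $\theta(d)=\sum_{k=0}^{N-1}y(k)y^*(k+d)$, indices mod $N$. *)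

From HB Require Import structures.
From mathcomp Require Import all_boot all_order all_algebra.
From mathcomp Require Import complex.
From mathcomp Require Import reals trigo.
Set Implicit Arguments. Unset Strict Implicit. Unset Printing Implicit Defensive.
Import Order.TTheory GRing.Theory Num.Theory.
Local Open Scope ring_scope.
Local Open Scope complex_scope.

(* xi_N^{1/2} = e^{-pi i / N} = cos(pi/N) - i sin(pi/N), so that
   xi_N^{x/2} = (halfxi N)^x for every integer x. *)
Definition halfxi (R : realType) (N : nat) : R[i] :=
  (cos (pi / N%:R)) -i* (sin (pi / N%:R)).

Definition zc_seq (R : realType) (N : nat) (u l : int) (k : nat) : R[i] :=
  halfxi R N ^ (u * ((k ^ 2)%:Z + (N %% 2)%:Z * k%:Z + 2 * l * k%:Z)).

Definition pi_map (N q : nat) (a b : int) (k : nat) : nat :=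
  `|(((k ^ q)%:Z + a * k%:Z + b) %% N%:Z)%Z|%N.

Definition permutes_ZN (N : nat) (f : nat -> nat) : Prop :=
  (forall k, (k < N)%N -> (f k < N)%N) /\
  (forall y, (y < N)%N -> exists! x, (x < N)%N /\ f x = y).

Definition interleave (R : realType) (N : nat) (s : nat -> R[i]) (p : nat -> nat)
  (k : nat) : R[i] := s (p k %% N)%N.

Definition autocorr (R : realType) (N : nat) (y : nat -> R[i]) (d : nat) : R[i] :=
  \sum_(k < N) y k * (y ((k + d) %% N)%N)^*.

From HB Require Import structures.
From mathcomp Require Import all_boot all_order all_algebra.
From mathcomp Require Import complex.
From mathcomp Require Import reals trigo.
From mathcomp Require Import ring lra.
Import Order.TTheory GRing.Theory Num.Theory.
Local Open Scope ring_scope.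
Local Open Scope complex_scope.
Set Implicit Arguments. Unset Strict Implicit. Unset Printing Implicit Defensive.

(** Write d = q^e d' with q not dividing d', and put m = N / q^(e+1), so that N
    divides q m d.  For P(x) = x^q + a x + b the prime q divides the middle
    binomial coefficients of (x + y)^q, hence both
      P(x+m+d) - P(x+m) - P(x+d) + P(x)   and
      (P(x+m) - P(x)) (P(x+d) - P(x)) - m d K,   K = (m^(q-1) + a) (d^(q-1) + a),
    are multiples of q m d, thus of N.  As the Zadoff-Chu phase is quadratic, the
    summand s(P x) s(P (x+d))^* of theta(d) gets multiplied by the constant
    xi_N^(-u m d K) when x is shifted by m, so theta(d) = 0 unless q | u K d'.
    But q divides neither u nor d', and the permutation property excludes
    q | 1 + a (by Fermat P(x) = (1 + a) x + b mod q, which would miss b + 1) and,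
    when q^2 | N, also q | a (then P(N/q) = P(0) mod N); with Fermat again,
    neither factor of K is divisible by q. *)

Lemma cos_eq1 (R : realType) (t : R) : 0 <= t < pi *+ 2 -> cos t = 1 -> t = 0.
Proof.
move=> /andP[t_ge0 t_lt2pi] cos_t.
have cos_eq1_0pi s : 0 <= s <= pi -> cos s = 1 -> s = 0.
  by move=> s_in cos_s; apply: cos_inj; rewrite ?in_itv //= ?cos0 ?lexx ?pi_ge0.
have [t_lepi|pi_ltt] := lerP t pi; first by apply: cos_eq1_0pi; rewrite ?t_ge0.
have : pi *+ 2 - t = 0.
  apply: cos_eq1_0pi; first by apply/andP; split; lra.
  by rewrite addrC cosD2pi cosN.
lra.
Qed.

Lemma sum_rot_mod (V : nmodType) (f : nat -> V) (N m : nat) :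
  \sum_(k < N) f ((k + m) %% N)%N = \sum_(k < N) f k.
Proof.
case: N => [|n]; first by rewrite !big_ord0.
rewrite [RHS](reindex_inj (addIr (inZp m : 'I_n.+1))).
by apply: eq_bigr => k _ /=; rewrite modnDmr.
Qed.

Lemma sum_eq0_rot (F : idomainType) (f : nat -> F) (N m : nat) (z : F) :
  z != 1 -> (forall k, (k < N)%N -> f ((k + m) %% N)%N = z * f k) ->
  \sum_(k < N) f k = 0.
Proof.
move=> z_neq1 f_rot; set S := \sum_(k < N) f k.
have S_eq : S = z * S.
  rewrite {1}/S -(sum_rot_mod f N m) mulr_sumr.
  by apply: eq_bigr => k _; exact: f_rot.
apply/eqP; move: S_eq => /eqP; rewrite -subr_eq0 -[X in X - _]mul1r -mulrBl mulf_eq0.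
by rewrite subr_eq0 eq_sym (negbTE z_neq1).
Qed.

Section HalfRootOfUnity.
Variables (R : realType) (N : nat).
Hypothesis N_gt0 : (0 < N)%N.
Local Notation h := (halfxi R N).

Lemma halfxi_exprn n :
  h ^+ n = cos (n%:R * (pi / N%:R)) -i* sin (n%:R * (pi / N%:R)).
Proof.
elim: n => [|n IHn]; first by rewrite expr0 !mul0r cos0 sin0 oppr0.
rewrite exprSr IHn /halfxi -addn1 natrD [(_ + 1) * _]mulrDl mul1r cosD sinD.
by apply/eqP; rewrite eq_complex /=; apply/andP; split; apply/eqP; ring.
Qed.

Lemma halfxi_mulconj : h * h^* = 1.
Proof.
rewrite /halfxi; apply/eqP; rewrite eq_complex /=; apply/andP; split; apply/eqP.
  by rewrite -[RHS](cos2Dsin2 (pi / N%:R)); ring.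
ring.
Qed.

Lemma halfxi_neq0 : h != 0.
Proof. by apply: contra_eq_neq halfxi_mulconj => ->; rewrite mul0r eq_sym oner_neq0. Qed.

Lemma conj_halfxi : h^* = h^-1.
Proof. by rewrite -[h^*]mul1r -(mulVf halfxi_neq0) -mulrA halfxi_mulconj mulr1. Qed.

Lemma halfxi_expr2N : h ^+ (2 * N) = 1.
Proof.
have two_pi : ((2 * N)%N%:R * (pi / N%:R) : R) = pi *+ 2.
  by rewrite natrM mulr2n; field; rewrite pnatr_eq0 -lt0n.
by rewrite halfxi_exprn two_pi cos2pi sin2pi oppr0.
Qed.

Lemma halfxi_expz_mod (z w : int) : ((2 * N)%N%:Z %| z - w)%Z -> h ^ z = h ^ w.
Proof.
case/dvdzP=> t /(canRL (subrK w)) ->.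
by rewrite expfzDr ?halfxi_neq0 // [t * _]mulrC -exprz_exp -exprnP halfxi_expr2N exp1rz mul1r.
Qed.

Lemma halfxi_expz_eq1 (z : int) : (h ^ z == 1) = ((2 * N)%N%:Z %| z)%Z.
Proof.
apply/eqP/idP => [hz1|dvd_z]; last by rewrite -(expr0z h); apply: halfxi_expz_mod; rewrite subr0.
have t_gt0 : 0 < pi / N%:R :> R by rewrite divr_gt0 ?pi_gt0 ?ltr0n.
have N2_neq0 : (2 * N)%N%:Z != 0 by rewrite eqz_nat muln_eq0 -lt0n N_gt0.
set r := (z %% (2 * N)%N%:Z)%Z.
have r_ge0 : 0 <= r by exact: modz_ge0.
have r_lt : (`|r| < 2 * N)%N by rewrite -ltz_nat gez0_abs ?ltz_mod.
apply/dvdz_mod0P; rewrite -/r -(gez0_abs r_ge0); apply/eqP; rewrite eqz_nat.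
have : h ^+ `|r| = 1.
  by rewrite exprnP gez0_abs // -hz1; apply: halfxi_expz_mod; rewrite -eqz_mod_dvd modz_mod.
rewrite halfxi_exprn => -[/cos_eq1 t0 _].
have : (`|r|%:R * (pi / N%:R) : R) = 0.
  apply: t0; rewrite mulr_ge0 ?ler0n ?ltW //=.
  rewrite mulrA ltr_pdivrMr ?ltr0n // -mulr_natr mulrC.
  have := pi_gt0 R; have : (`|r|%:R : R) < 2%:R * N%:R by rewrite -natrM ltr_nat.
  rewrite mulr2n; nra.
by move/eqP; rewrite mulf_eq0 pnatr_eq0 (gt_eqF t_gt0) orbF.
Qed.

End HalfRootOfUnity.

Definition zc_phase (N : nat) (l x : int) : int :=
  x ^+ 2 + ((N %% 2)%N%:Z + 2 * l) * x.

Definition zc_seqz (R : realType) (N : nat) (u l x : int) : R[i] :=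
  halfxi R N ^ (u * zc_phase N l x).

Lemma PoszX (k n : nat) : (k ^ n)%N%:Z = k%:Z ^+ n.
Proof. by rewrite -[LHS]natz natrX natz. Qed.

Lemma zc_seqzE (R : realType) (N : nat) (u l : int) (k : nat) :
  zc_seq R N u l k = zc_seqz R N u l k%:Z.
Proof. by rewrite /zc_seq /zc_seqz /zc_phase PoszX; congr (_ ^ (u * _)); ring. Qed.

Section ZadoffChu.
Variables (R : realType) (N : nat) (u l : int).
Hypothesis N_gt0 : (0 < N)%N.
Local Notation h := (halfxi R N).
Local Notation zc := (zc_seqz R N u l).
Local Notation phase := (zc_phase N l).

Lemma zc_seqzDN (x : int) : zc (x + N%:Z) = zc x.
Proof.
apply: halfxi_expz_mod => //; rewrite -mulrBr dvdz_mull //.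
apply/dvdzP; exists (x + (N %/ 2)%N%:Z + (N %% 2)%N%:Z + l).
have := congr1 Posz (divn_eq N 2); rewrite PoszD PoszM.
set n2 := (N %/ 2)%N%:Z; set r := (N %% 2)%N%:Z => N_eq.
by rewrite /zc_phase -/r PoszM N_eq; ring.
Qed.

Lemma zc_seqz_mod (x y : int) : (N%:Z %| x - y)%Z -> zc x = zc y.
Proof.
case/dvdzP=> t /(canRL (subrK y)) ->; elim/int_rec: t => [|n IHn|n IHn].
- by rewrite mul0r add0r.
- by rewrite -addn1 PoszD mulrDl mul1r addrAC zc_seqzDN.
- by rewrite -IHn -[LHS]zc_seqzDN -addn1 PoszD; congr zc; ring.
Qed.

Lemma zc_seqz_mulconj (x y : int) : zc x * (zc y)^* = h ^ (u * (phase x - phase y)).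
Proof.
rewrite /zc_seqz fmorphXz [X in _ * X ^ _](_ : _ = h^-1); last exact: conj_halfxi.
by rewrite exprz_inv -expfzDr ?halfxi_neq0 // mulrBr.
Qed.

End ZadoffChu.

Definition trinom (q : nat) (a b x : int) : int := x ^+ q + a * x + b.

Lemma dvdz_subXX (x y : int) (n : nat) : (x - y %| x ^+ n - y ^+ n)%Z.
Proof. by rewrite subrXX dvdz_mulr. Qed.

Lemma dvdz_trinom_sub (q : nat) (a b n x y : int) :
  (n %| x - y)%Z -> (n %| trinom q a b x - trinom q a b y)%Z.
Proof.
move=> dvd_xy; have -> : trinom q a b x - trinom q a b y = (x ^+ q - y ^+ q) + a * (x - y).
  by rewrite /trinom; ring.
by rewrite rpredD ?dvdz_mull // (dvdz_trans dvd_xy) ?dvdz_subXX.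
Qed.

Lemma expD_subE (q : nat) (x y : int) : (0 < q)%N ->
  (x + y) ^+ q - x ^+ q - y ^+ q =
  \sum_(i < q.+1 | (0 < i < q)%N) x ^+ (q - i) * y ^+ i *+ 'C(q, i).
Proof.
move=> q_gt0; rewrite exprDn (bigD1 ord0) // (bigD1 ord_max) ?neq_ltn //=.
rewrite subn0 subnn bin0 binn !mulr1n expr0 mulr1 mul1r addrC addrK addrC addrK.
by apply: eq_bigl => i; rewrite -!val_eqE /= lt0n ltn_neqAle -ltnS ltn_ord andbT.
Qed.

Section PrimeExponent.
Variable q : nat.
Hypothesis q_prime : prime q.

Lemma dvdz_prime_bin (i : nat) : (0 < i < q)%N -> (q%:Z %| 'C(q, i)%:Z)%Z.
Proof. by move=> i_in; rewrite dvdzE /= prime_dvd_bin. Qed.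

Lemma dvdz_expD_sub (x y : int) : (q%:Z * x * y %| (x + y) ^+ q - x ^+ q - y ^+ q)%Z.
Proof.
rewrite expD_subE ?prime_gt0 //; apply: rpred_sum => i /andP[i_gt0 i_ltq].
rewrite -mulr_natl natz mulrA.
have dvd_C : (q%:Z %| 'C(q, i)%:Z)%Z by rewrite dvdz_prime_bin ?i_gt0.
have dvd_x : (x %| x ^+ (q - i))%Z by rewrite dvdz_exp ?subn_gt0.
have dvd_y : (y %| y ^+ i)%Z by rewrite dvdz_exp.
exact: dvdz_mul (dvdz_mul dvd_C dvd_x) dvd_y.
Qed.


Lemma dvdz_expD_second_diff (x m d : int) :
  (q%:Z * m * d %| (x + m + d) ^+ q - (x + m) ^+ q - (x + d) ^+ q + x ^+ q)%Z.
Proof.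
have -> : (x + m + d) ^+ q - (x + m) ^+ q - (x + d) ^+ q + x ^+ q =
    ((x + m + d) ^+ q - (x + m) ^+ q - d ^+ q) - ((x + d) ^+ q - x ^+ q - d ^+ q).
  by ring.
have q_gt0 := prime_gt0 q_prime.
rewrite (expD_subE (x + m) d q_gt0) (expD_subE x d q_gt0) -sumrB.
apply: rpred_sum => i /andP[i_gt0 i_ltq].
rewrite -mulrnBl -mulrBl -mulr_natl natz mulrA.
have dvd_C : (q%:Z %| 'C(q, i)%:Z)%Z by rewrite dvdz_prime_bin ?i_gt0.
have dvd_m : (m %| (x + m) ^+ (q - i) - x ^+ (q - i))%Z.
  by have := dvdz_subXX (x + m) x (q - i); rewrite addrAC subrr add0r.
have dvd_d : (d %| d ^+ i)%Z by rewrite dvdz_exp.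
exact: dvdz_mul (dvdz_mul dvd_C dvd_m) dvd_d.
Qed.

Lemma Euclid_dvdzM (x y : int) : (q%:Z %| x * y)%Z = (q%:Z %| x)%Z || (q%:Z %| y)%Z.
Proof. by rewrite !dvdzE abszM Euclid_dvdM. Qed.

Lemma dvdz_fermat (x : nat) : (q%:Z %| x%:Z ^+ q - x%:Z)%Z.
Proof. by rewrite -eqz_mod_dvd -PoszX !modz_nat fermat_little. Qed.

Lemma dvdz_fermat_pred (x : nat) : ~~ (q %| x)%N -> (q%:Z %| x%:Z ^+ q.-1 - 1)%Z.
Proof.
move=> q_ndvd_x; have coprime_qx : coprimez q%:Z x%:Z by rewrite coprimezE prime_coprime.
have := dvdz_fermat x; rewrite -{1}(prednK (prime_gt0 q_prime)) exprS.
by rewrite -[X in _ - X]mulr1 -mulrBr mulrC Gauss_dvdzl.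
Qed.

End PrimeExponent.

Section TrinomialDifferences.
Variables (q : nat) (a b : int).
Hypothesis q_prime : prime q.
Local Notation P := (trinom q a b).

Lemma trinomD_sub (x y : int) :
  exists w, P (x + y) - P x = y * (y ^+ q.-1 + a + q%:Z * w).
Proof.
have [w expD_eq] := dvdzP (dvdz_expD_sub q_prime x y).
exists (w * x).
have -> : P (x + y) - P x = ((x + y) ^+ q - x ^+ q - y ^+ q) + y * y ^+ q.-1 + a * y.
  by rewrite /trinom -exprS prednK ?prime_gt0 //; ring.
by rewrite expD_eq; ring.
Qed.

Lemma dvdz_trinom_second_diff (x m d : int) :
  (q%:Z * m * d %| P (x + m + d) - P (x + m) - P (x + d) + P x)%Z.
Proof.
have -> : P (x + m + d) - P (x + m) - P (x + d) + P x =
    (x + m + d) ^+ q - (x + m) ^+ q - (x + d) ^+ q + x ^+ q by rewrite /trinom; ring.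
exact: dvdz_expD_second_diff.
Qed.

Lemma dvdz_trinom_diff_mul (x m d : int) :
  (q%:Z * m * d %| (P (x + m) - P x) * (P (x + d) - P x)
                    - m * d * ((m ^+ q.-1 + a) * (d ^+ q.-1 + a)))%Z.
Proof.
have [v ->] := trinomD_sub x m; have [w ->] := trinomD_sub x d.
apply/dvdzP; exists ((m ^+ q.-1 + a) * w + v * (d ^+ q.-1 + a) + q%:Z * v * w).
ring.
Qed.

End TrinomialDifferences.

Section AutocorrShift.
Variables (R : realType) (N : nat) (u l : int) (q : nat) (a b m d : int).
Hypothesis N_gt0 : (0 < N)%N.
Local Notation h := (halfxi R N).
Local Notation zc := (zc_seqz R N u l).
Local Notation phase := (zc_phase N l).
Local Notation P := (trinom q a b).

Definition autocorr_term (x : int) : R[i] := zc (P x) * (zc (P (x + d)))^*.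

Lemma autocorr_term_mod (x y : int) :
  (N%:Z %| x - y)%Z -> autocorr_term x = autocorr_term y.
Proof.
move=> dvd_xy; rewrite /autocorr_term.
congr (_ * _^*); apply: zc_seqz_mod => //; apply: dvdz_trinom_sub => //.
by rewrite opprD addrACA subrr addr0.
Qed.

Hypothesis q_prime : prime q.
Hypothesis N_dvd : (N%:Z %| q%:Z * m * d)%Z.

Lemma autocorr_termDm (x : int) :
  autocorr_term (x + m) =
  h ^ (- (2 * (u * (m * d * ((m ^+ q.-1 + a) * (d ^+ q.-1 + a)))))) * autocorr_term x.
Proof.
set K := (m ^+ q.-1 + a) * (d ^+ q.-1 + a).
set X := P x; set Y := P (x + d); set A := P (x + m) - X.
have P_xm : P (x + m) = X + A by rewrite /A [X + _]addrC subrK.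
have zc_P_xmd : zc (P (x + m + d)) = zc (Y + A).
  apply: zc_seqz_mod => //; apply: dvdz_trans N_dvd _.
  have -> : P (x + m + d) - (Y + A) = P (x + m + d) - P (x + m) - P (x + d) + P x.
    by rewrite /Y /A /X; ring.
  exact: dvdz_trinom_second_diff.
have dvd_AYX : (N%:Z %| A * (Y - X) - m * d * K)%Z.
  by apply: dvdz_trans N_dvd _; apply: dvdz_trinom_diff_mul.
rewrite /autocorr_term P_xm zc_P_xmd !zc_seqz_mulconj // -expfzDr ?halfxi_neq0 //.
apply: halfxi_expz_mod => //.
have -> : u * (phase (X + A) - phase (Y + A)) - (- (2 * (u * (m * d * K))) + u * (phase X - phase Y))
    = 2 * - (u * (A * (Y - X) - m * d * K)) by rewrite /zc_phase; ring.
by rewrite PoszM dvdz_mul2l // rpredN dvdz_mull.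
Qed.

End AutocorrShift.

Section Interleave.
Variables (R : realType) (N : nat) (u l : int) (q : nat) (a b : int).
Hypothesis N_gt0 : (0 < N)%N.

Lemma pi_mapE (k : nat) : (pi_map N q a b k)%:Z = (trinom q a b k%:Z %% N%:Z)%Z.
Proof. by rewrite /pi_map PoszX gez0_abs // modz_ge0 // eqz_nat -lt0n. Qed.

Lemma pi_map_lt (k : nat) : (pi_map N q a b k < N)%N.
Proof. by rewrite -ltz_nat pi_mapE ltz_mod // eqz_nat -lt0n. Qed.

Lemma interleave_zc_seqE (k : nat) :
  interleave N (zc_seq R N u l) (pi_map N q a b) k = zc_seqz R N u l (trinom q a b k%:Z).
Proof.
rewrite /interleave modn_small ?pi_map_lt // zc_seqzE pi_mapE.
by apply: zc_seqz_mod => //; rewrite -eqz_mod_dvd modz_mod.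
Qed.

Lemma autocorr_interleave_trinom (d : nat) :
  autocorr N (interleave N (zc_seq R N u l) (pi_map N q a b)) d =
  \sum_(k < N) autocorr_term R N u l q a b d%:Z k%:Z.
Proof.
apply: eq_bigr => k _; rewrite !interleave_zc_seqE /autocorr_term.
congr (_ * _^*); apply: zc_seqz_mod => //; apply: dvdz_trinom_sub.
by rewrite -eqz_mod_dvd -modz_nat modz_mod PoszD.
Qed.

End Interleave.

Section TrinomialPermutation.
Variables (N q : nat) (a b : int).
Hypotheses (N_gt0 : (0 < N)%N) (q_prime : prime q) (q_dvd_N : (q %| N)%N).
Hypothesis pi_perm : permutes_ZN N (pi_map N q a b).
Local Notation P := (trinom q a b).

Lemma perm_trinom_ndvd1D : ~~ (q%:Z %| 1 + a)%Z.
Proof.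
apply/negP => q_dvd_1a.
have N_neq0 : N%:Z != 0 by rewrite eqz_nat -lt0n.
set y := `|((b + 1) %% N%:Z)%Z|%N.
have yE : y%:Z = ((b + 1) %% N%:Z)%Z by rewrite gez0_abs // modz_ge0.
have y_lt : (y < N)%N by rewrite -ltz_nat yE ltz_mod.
have [x [[_ xE] _]] := pi_perm.2 y y_lt.
have dvd_N : (N%:Z %| P x%:Z - (b + 1))%Z by rewrite -eqz_mod_dvd -pi_mapE // xE yE.
have dvd_q : (q%:Z %| P x%:Z - b)%Z.
  have -> : P x%:Z - b = (x%:Z ^+ q - x%:Z) + (1 + a) * x%:Z by rewrite /trinom; ring.
  by rewrite rpredD ?dvdz_fermat ?dvdz_mulr.
have := rpredB dvd_q (dvdz_trans (q_dvd_N : (q%:Z %| N%:Z)%Z) dvd_N).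
have -> : P x%:Z - b - (P x%:Z - (b + 1)) = 1 by ring.
by rewrite dvdz1 gtn_eqF ?prime_gt1.
Qed.

Lemma perm_trinom_ndvd_coef : (q ^ 2 %| N)%N -> ~~ (q%:Z %| a)%Z.
Proof.
move=> q2_dvd_N; apply/negP => q_dvd_a.
set n := (N %/ q)%N.
have N_eq : N = (n * q)%N by rewrite divnK.
have q_dvd_n : (q %| n)%N by rewrite -(dvdn_pmul2r (prime_gt0 q_prime)) -N_eq mulnn.
have n_gt0 : (0 < n)%N by move: N_gt0; rewrite N_eq muln_gt0 => /andP[].
have n_lt : (n < N)%N by rewrite N_eq ltn_Pmulr ?prime_gt1.
have dvd_N : (N%:Z %| P n%:Z - P 0)%Z.
  have -> : P n%:Z - P 0 = n%:Z ^+ q + n%:Z * a.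
    by rewrite /trinom expr0n (gtn_eqF (prime_gt0 q_prime)) mulr0n; ring.
  rewrite N_eq PoszM rpredD ?dvdz_mul //.
  apply: dvdz_trans (dvdz_exp2l _ (prime_gt1 q_prime)); rewrite expr2.
  exact: dvdz_mul.
have pi_eq : pi_map N q a b n = pi_map N q a b 0.
  by apply/eqP; rewrite -eqz_nat !pi_mapE // eqz_mod_dvd.
have [y [_ y_uniq]] := pi_perm.2 _ (pi_perm.1 0 N_gt0).
by move: n_gt0; rewrite -(y_uniq n (conj n_lt pi_eq)) (y_uniq 0 (conj N_gt0 erefl)).
Qed.

Lemma perm_trinom_ndvdXD (x : nat) :
  ((q %| x) -> (q ^ 2 %| N))%N -> ~~ (q%:Z %| x%:Z ^+ q.-1 + a)%Z.
Proof.
move=> q2_dvd_N; have [q_dvd_x | q_ndvd_x] := boolP (q %| x)%N.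
  rewrite rpredDl ?perm_trinom_ndvd_coef ?q2_dvd_N // dvdz_exp //.
  by rewrite -ltnS prednK ?prime_gt1 ?prime_gt0.
have -> : x%:Z ^+ q.-1 + a = (x%:Z ^+ q.-1 - 1) + (1 + a) by ring.
by rewrite rpredDl ?dvdz_fermat_pred ?perm_trinom_ndvd1D.
Qed.

End TrinomialPermutation.

Lemma halfxi_shift_neq1 (R : realType) (N q m d d' : nat) (u K : int) :
  (0 < N)%N -> prime q -> (m * d * q = N * d')%N -> ~~ (q%:Z %| u * K * d'%:Z)%Z ->
  halfxi R N ^ (- (2 * (u * (m%:Z * d%:Z * K)))) != 1.
Proof.
move=> N_gt0 q_prime mdq; apply: contra.
have q_neq0 : q%:Z != 0 by rewrite eqz_nat -lt0n prime_gt0.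
have N_neq0 : N%:Z != 0 by rewrite eqz_nat -lt0n.
have mdq_z : m%:Z * d%:Z * q%:Z = N%:Z * d'%:Z by rewrite -!PoszM mdq.
rewrite halfxi_expz_eq1 // PoszM rpredN dvdz_mul2l // -(dvdz_mul2r q_neq0).
have -> : u * (m%:Z * d%:Z * K) * q%:Z = N%:Z * (u * K * d'%:Z).
  by transitivity (u * K * (m%:Z * d%:Z * q%:Z)); [ring | rewrite mdq_z; ring].
by rewrite dvdz_mul2l.
Qed.

Theorem proposition1 (R : realType) (N : nat) (u l : int) (q : nat) (a b : int)
  (d : nat) :
  (0 < N)%N -> prime q -> (q %| N)%N ->
  coprimez u N%:Z ->
  permutes_ZN N (pi_map N q a b) ->
  (0 < d)%N -> (d < N)%N -> ~~ (q ^ logn q N %| d)%N ->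
  autocorr N (interleave N (zc_seq R N u l) (pi_map N q a b)) d = 0.
Proof.
move=> N_gt0 q_prime q_dvd_N u_coprime pi_perm d_gt0 _ qn_ndvd_d.
have [d' q_coprime_d' d_eq] := pfactor_coprime q_prime d_gt0.
set e := logn q d in d_eq.
have e_lt : (e < logn q N)%N.
  rewrite ltnNge; apply: contra qn_ndvd_d => le_ne.
  by rewrite (dvdn_trans (dvdn_exp2l q le_ne)) // d_eq dvdn_mull.
set m := (N %/ q ^ e.+1)%N.
have N_eq : (m * q ^ e.+1)%N = N by rewrite divnK // pfactor_dvdn.
have mdq : (m * d * q = N * d')%N by rewrite -N_eq d_eq expnSr; ring.
have N_dvd : (N%:Z %| q%:Z * m%:Z * d%:Z)%Z.
  by rewrite -!PoszM dvdzE /= [(q * m)%N]mulnC mulnAC mdq dvdn_mulr.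
have q2_dvd_N_of_d : (q %| d -> q ^ 2 %| N)%N.
  move=> q_dvd_d; rewrite -N_eq dvdn_mull // dvdn_exp2l // ltnS.
  by rewrite -pfactor_dvdn // expn1.
have q2_dvd_N_of_m : (q %| m -> q ^ 2 %| N)%N.
  by move=> q_dvd_m; rewrite -N_eq -mulnn dvdn_mul // expnS dvdn_mulr.
set K := (m%:Z ^+ q.-1 + a) * (d%:Z ^+ q.-1 + a).
have q_ndvd : ~~ (q%:Z %| u * K * d'%:Z)%Z.
  rewrite !Euclid_dvdzM // !negb_or !(perm_trinom_ndvdXD N_gt0 q_prime q_dvd_N pi_perm) //.
  by rewrite !dvdzE /= -!prime_coprime // coprime_sym (coprime_dvdr q_dvd_N u_coprime) q_coprime_d'.
rewrite autocorr_interleave_trinom //.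
apply: (sum_eq0_rot (f := fun k : nat => autocorr_term R N u l q a b d k) (m := m)
  (halfxi_shift_neq1 R N_gt0 q_prime mdq q_ndvd)) => k _.
rewrite -autocorr_termDm //; apply: autocorr_term_mod => //.
by rewrite -eqz_mod_dvd -modz_nat modz_mod PoszD.
Qed.
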